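(* Let $N,M$ be positive integers, let $\mathscr{A}\subset\mathscr{M}(N,M)$ and $\mathscr{B}\subset\mathscr{M}(M,N)$ be finite sets of real matrices, and let $\|\cdot\|$ be a submultiplicative norm on $\mathscr{M}(N,N)$. Suppose that for every sequence $\{A_n\}_{n\ge1}$ with $A_n\in\mathscr{A}$ there exist a positive integer $k$ and matrices $B_1,\ldots,B_k\in\mathscr{B}$ such that $\|A_kB_k\cdots A_1B_1\|<1$. Then there exist constants $C>0$ and $\lambda\in(0,1)$ such that for every sequence $\{A_n\in\mathscr{A}\}$ there is a sequence $\{B_n\in\mathscr{B}\}$ for which \[ \|A_nB_n\cdots A_1B_1\|\le C\lambda^n,\qquad n=1,2,\ldots. \]
   Context: $\mathscr{M}(p,q)$ denotes the space of $p\times q$ real matrices with the topology of elementwise convergence. A norm on $\mathscr{M}(N,N)$ is submultiplicative if $\|XY\|\le\|X\|\,\|Y\|$ for all $X,Y$. *)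

From mathcomp Require Import all_boot all_order all_algebra.
From mathcomp Require Import reals.
Set Implicit Arguments. Unset Strict Implicit. Unset Printing Implicit Defensive.
Import Order.TTheory GRing.Theory Num.Theory.
Local Open Scope ring_scope.

Definition submult_norm (R : realType) (N : nat) (nrm : 'M[R]_N -> R) : Prop :=
  [/\ (forall X, nrm X = 0 -> X = 0),
      (forall (a : R) X, nrm (a *: X) = `|a| * nrm X),
      (forall X Y, nrm (X + Y) <= nrm X + nrm Y)
    & (forall X Y, nrm (X *m Y) <= nrm X * nrm Y)].

(* prodAB A B k = A_k B_k ... A_1 B_1 (sequences indexed from 1; k = 0 gives 1). *)
Fixpoint prodAB (R : realType) (N M : nat)
    (A : nat -> 'M[R]_(N, M)) (B : nat -> 'M[R]_(M, N)) (k : nat) : 'M[R]_N :=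
  match k with
  | 0 => 1%:M
  | k'.+1 => (A k'.+1 *m B k'.+1) *m prodAB A B k'
  end.

From mathcomp Require Import all_boot all_order all_algebra.
From mathcomp Require Import reals boolp ring lra zify.
Import Order.TTheory GRing.Theory Num.Theory.
Local Open Scope ring_scope.

(* The hypothesis is a bar on the finitely branching tree of words over [sA]; by
   König's lemma (the fan theorem) the bar is uniform, so every sequence of A's
   admits a contracting block of length at most some K.  There are only finitely
   many products of length at most K, hence the contracting ones have norm at
   most some q < 1 and all of them have norm at most some Mx.  Choosing the B's
   greedily block after block, each block contributes a factor q, and the
   product of the first n factors decays like q^(n/K) <= lam^n, where lam^K >= q. *)

Section Prefixes.
Context {T : Type}.
Implicit Types f g : nat -> T.

Definition eq_upto n f g := forall i, (0 < i <= n)%N -> f i = g i.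

Lemma eq_upto_refl {n f} : eq_upto n f f.
Proof. by []. Qed.

Lemma eq_upto_sym {n f g} : eq_upto n f g -> eq_upto n g f.
Proof. by move=> fg i /fg. Qed.

Lemma eq_upto_trans {n f g h} : eq_upto n f g -> eq_upto n g h -> eq_upto n f h.
Proof. by move=> fg gh i i_n; rewrite fg ?gh. Qed.

Lemma eq_upto_le {m n f g} : (m <= n)%N -> eq_upto n f g -> eq_upto m f g.
Proof.
by move=> le_mn fg i /andP[i_gt0 le_im]; rewrite fg // i_gt0 (leq_trans le_im).
Qed.

Definition shift t f i := f (t + i)%N.

Definition splice t f g i := if (i <= t)%N then f i else g (i - t)%N.

Lemma eq_upto_splice {t f g} : eq_upto t f (splice t f g).
Proof. by move=> i /andP[_ le_it]; rewrite /splice le_it. Qed.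

Lemma shift_splice {t f g i} : (0 < i)%N -> shift t (splice t f g) i = g i.
Proof.
by move=> i_gt0; rewrite /shift /splice ifN ?addKn // -ltnNge -{1}[t]addn0 ltn_add2l.
Qed.

Lemma dependent_choice {X : Type} (P : nat -> X -> Prop)
    (Rel : nat -> X -> X -> Prop) {x0 : X} :
  P 0%N x0 -> (forall n x, P n x -> exists2 y, P n.+1 y & Rel n x y) ->
  exists f : nat -> X, forall n, P n (f n) /\ Rel n (f n) (f n.+1).
Proof.
move=> P0 step.
have next n (x : {x | P n x}) : {y | P n.+1 y /\ Rel n (sval x) y}.
  apply: cid; have [y Py Rxy] := step n _ (svalP x); by exists y.
pose fix chain n : {x | P n x} :=
  if n is m.+1 then exist _ _ (proj1 (svalP (next m (chain m))))
  else exist _ x0 P0.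
exists (fun n => sval (chain n)) => n.
by split; [exact: svalP | exact: (proj2 (svalP (next n (chain n))))].
Qed.

Section Chain.
Variables (t : nat -> nat) (g : nat -> nat -> T).
Hypothesis t_homo : forall j, (t j <= t j.+1)%N.
Hypothesis g_chain : forall j, eq_upto (t j) (g j) (g j.+1).

Lemma chain_eq_upto {j n} : (j <= n)%N -> eq_upto (t j) (g j) (g n).
Proof.
elim: n => [|n IH]; first by rewrite leqn0 => /eqP->.
rewrite leq_eqVlt => /predU1P[-> //|lt_jn].
apply: eq_upto_trans (IH lt_jn) (eq_upto_le _ (g_chain n)).
exact: (homo_leq leqnn leq_trans t_homo).
Qed.

Lemma diagonal_eq_upto : (forall j, (j <= t j)%N) ->
  forall n, eq_upto n (fun i => g i i) (g n).
Proof.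
move=> t_ge n i /andP[i_gt0 le_in].
by apply: (chain_eq_upto le_in); rewrite i_gt0 t_ge.
Qed.

End Chain.
End Prefixes.

Definition valued_upto {T : eqType} (s : seq T) n (f : nat -> T) :=
  forall i, (0 < i <= n)%N -> f i \in s.

Definition valued_in {T : eqType} (s : seq T) (f : nat -> T) :=
  forall n, (0 < n)%N -> f n \in s.

Section Valued.
Context {T : eqType} {s : seq T}.
Implicit Types f g : nat -> T.

Lemma valued_upto_le {m n f} : (m <= n)%N -> valued_upto s n f -> valued_upto s m f.
Proof.
by move=> le_mn fs i /andP[i_gt0 le_im]; rewrite fs // i_gt0 (leq_trans le_im).
Qed.

Lemma valued_upto_eq {n f g} : eq_upto n f g -> valued_upto s n f -> valued_upto s n g.
Proof. by move=> fg fs i i_n; rewrite -fg ?fs. Qed.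

Lemma valued_in_upto {n f} : valued_in s f -> valued_upto s n f.
Proof. by move=> fs i /andP[i_gt0 _]; apply: fs. Qed.

Lemma valued_in_shift {t f} : valued_in s f -> valued_in s (shift t f).
Proof. by move=> fs n n_gt0; apply: fs; rewrite addn_gt0 n_gt0 orbT. Qed.

End Valued.

Lemma finite_monotone_bound {I : eqType} {r : seq I} {P : I -> nat -> Prop} :
  (forall i m m', (m <= m')%N -> P i m -> P i m') ->
  (forall i, i \in r -> exists m, P i m) -> exists m, forall i, i \in r -> P i m.
Proof.
move=> P_mono; elim: r => [|i r IH] ex_m; first by exists 0%N.
have [m1 P1] := ex_m i (mem_head i r).
have [m2 P2] : exists m, forall j, j \in r -> P j m.
  by apply: IH => j j_r; apply: ex_m; rewrite inE j_r orbT.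
exists (maxn m1 m2) => j; rewrite inE => /predU1P[-> | j_r].
  exact: P_mono (leq_maxl m1 m2) P1.
exact: P_mono (leq_maxr m1 m2) (P2 j j_r).
Qed.

Section FanTheorem.
Context {T : eqType} (s : seq T) (good : (nat -> T) -> nat -> Prop).
Hypothesis good_eq_upto : forall {k f g}, eq_upto k f g -> good f k -> good g k.
Implicit Types f g : nat -> T.

Definition bad_upto n f :=
  valued_upto s n f /\ forall k, (0 < k <= n)%N -> ~ good f k.

Definition bad_extendable n f :=
  forall m, exists2 g, eq_upto n f g & bad_upto (n + m) g.

Lemma bad_upto_le {m n f} : (m <= n)%N -> bad_upto n f -> bad_upto m f.
Proof.
move=> le_mn [fs f_bad]; split; first exact: valued_upto_le fs.
by move=> k /andP[k_gt0 le_km]; apply: f_bad; rewrite k_gt0 (leq_trans le_km).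
Qed.

Lemma bad_upto_eq {n f g} : eq_upto n f g -> bad_upto n f -> bad_upto n g.
Proof.
move=> fg [fs f_bad]; split; first exact: valued_upto_eq fs.
move=> k /andP[k_gt0 le_kn] /(good_eq_upto (eq_upto_sym (eq_upto_le le_kn fg))).
by apply: f_bad; rewrite k_gt0.
Qed.

(* Pigeonhole over the finitely many letters of [s]: if no one-letter extension
   were bad-extendable, a common depth m would refute all of them at once. *)
Lemma bad_extendable_step n f :
  bad_extendable n f -> exists2 g, bad_extendable n.+1 g & eq_upto n f g.
Proof.
move=> f_ext; apply: contrapT => no_ext.
pose ext a := splice n f (fun=> a).
have [m ext_dead] : exists m, forall a, a \in s ->
    ~ exists2 g, eq_upto n.+1 (ext a) g & bad_upto (n.+1 + m) g.
  apply: finite_monotone_bound => [a m m' le_mm' dead [g ag g_bad] | a _].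
    by apply: dead; exists g => //; apply: bad_upto_le g_bad; rewrite leq_add2l.
  apply: contrapT => alive; apply: no_ext; exists (ext a); last first.
    exact: eq_upto_splice.
  by move=> m; apply: contrapT => dead; apply: alive; exists m.
have [g fg g_bad] := f_ext m.+1.
have g_s : g n.+1 \in s by apply: g_bad.1; rewrite ltn0Sn /= -addSnnS leq_addr.
apply: (ext_dead _ g_s); exists g; last by rewrite addSnnS.
move=> i /andP[i_gt0 le_in1]; rewrite /ext /splice.
case: leqP => [le_in | lt_ni]; first by rewrite fg // i_gt0.
by have -> : i = n.+1 by apply/eqP; rewrite eqn_leq le_in1.
Qed.

Theorem fan_bound :
  (forall f, valued_in s f -> exists k, (0 < k)%N /\ good f k) ->
  exists K, forall f, valued_in s f -> exists k, (0 < k <= K)%N /\ good f k.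
Proof.
move=> bar; apply: contrapT => /forallNP unbounded.
have bad_of m : exists g, bad_upto m g.
  have /existsNP[g /existsNP[gs no_k]] := unbounded m.
  exists g; split; first exact: valued_in_upto.
  by move=> k k_m g_k; apply: no_k; exists k.
have [f0 _] := bad_of 0%N.
have ext0 : bad_extendable 0 f0.
  move=> m; have [g g_bad] := bad_of m.
  by exists g => // i /andP[/leq_trans le_1 /le_1].
have [F F_chain] := dependent_choice bad_extendable eq_upto ext0 bad_extendable_step.
pose D i := F i i.
have D_bad n : bad_upto n D.
  have [g Fg g_bad] := (F_chain n).1 0%N; rewrite addn0 in g_bad.
  apply: bad_upto_eq _ g_bad; apply: eq_upto_sym; apply: eq_upto_trans _ Fg.
  exact: (diagonal_eq_upto id F leqnSn (fun j => (F_chain j).2) leqnn).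
have D_s : valued_in s D by move=> n n_gt0; apply: (D_bad n).1; rewrite n_gt0 /=.
have [k [k_gt0 D_k]] := bar D D_s.
by apply: (D_bad k).2 D_k; rewrite k_gt0 leqnn.
Qed.

End FanTheorem.

Section Products.
Context {R : realType} {N M : nat}.
Implicit Types (A : nat -> 'M[R]_(N, M)) (B : nat -> 'M[R]_(M, N)).

Lemma prodAB_eq_upto {k A A' B B'} :
  eq_upto k A A' -> eq_upto k B B' -> prodAB A B k = prodAB A' B' k.
Proof.
elim: k => [//|k IH] AA' BB' /=; have last_k : (0 < k.+1 <= k.+1)%N by rewrite leqnn.
by rewrite AA' // BB' // IH //; apply: eq_upto_le (leqnSn k) _.
Qed.

Lemma prodAB_addn A B t k :
  prodAB A B (t + k) = prodAB (shift t A) (shift t B) k *m prodAB A B t.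
Proof.
elim: k => [|k IH]; first by rewrite addn0 mul1mx.
by rewrite addnS /= IH mulmxA /shift addnS.
Qed.

Lemma prodAB_splice A B B' t k :
  prodAB A (splice t B B') (t + k) = prodAB (shift t A) B' k *m prodAB A B t.
Proof.
rewrite prodAB_addn (prodAB_eq_upto eq_upto_refl (eq_upto_sym eq_upto_splice)).
congr (_ *m _); apply: prodAB_eq_upto eq_upto_refl _ => i /andP[i_gt0 _].
exact: shift_splice.
Qed.

Definition contracting_prefix (sB : seq 'M[R]_(M, N)) (nrm : 'M[R]_N -> R) A k :=
  exists B, valued_upto sB k B /\ nrm (prodAB A B k) < 1.

Lemma contracting_prefix_eq_upto sB nrm k A A' :
  eq_upto k A A' -> contracting_prefix sB nrm A k -> contracting_prefix sB nrm A' k.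
Proof.
by move=> AA' [B [Bs B_lt1]]; exists B; rewrite -(prodAB_eq_upto AA' eq_upto_refl).
Qed.

Fixpoint prods (sA : seq 'M[R]_(N, M)) (sB : seq 'M[R]_(M, N)) k : seq 'M[R]_N :=
  if k is k'.+1 then
    [seq ab *m p | ab <- [seq a *m b | a <- sA, b <- sB], p <- prods sA sB k']
  else [:: 1%:M].

Lemma prodAB_in_prods sA sB A B k :
  valued_upto sA k A -> valued_upto sB k B -> prodAB A B k \in prods sA sB k.
Proof.
elim: k => [|k IH] As Bs /=; first by rewrite mem_seq1.
have last_k : (0 < k.+1 <= k.+1)%N by rewrite leqnn.
apply: allpairs_f; first by apply: allpairs_f; [apply: As | apply: Bs].
by apply: IH; apply: valued_upto_le (leqnSn k) _.
Qed.

End Products.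

Section SubmultiplicativeNorm.
Context {R : realType} {N : nat} (nrm : 'M[R]_N -> R).
Hypothesis nrm_submult : submult_norm nrm.

Lemma submult_norm_ge0 X : 0 <= nrm X.
Proof.
case: nrm_submult => _ nrmZ nrmD _.
have nrm0 : nrm 0 = 0 by rewrite -(scale0r X) nrmZ normr0 mul0r.
have := nrmD X (- X); rewrite addrN nrm0 -scaleN1r nrmZ normrN normr1 mul1r.
lra.
Qed.

Lemma submult_norm1_gt0 : (0 < N)%N -> 0 < nrm 1%:M.
Proof.
case: nrm_submult => nrm_eq0 _ _ _ N_gt0.
rewrite lt_def submult_norm_ge0 andbT; apply/eqP => /nrm_eq0/matrixP.
by move=> /(_ (Ordinal N_gt0) (Ordinal N_gt0)) /eqP; rewrite !mxE eqxx oner_eq0.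
Qed.

End SubmultiplicativeNorm.

Lemma bernoulli_subr {R : realDomainType} (x : R) n :
  x <= 1 -> 1 - x *+ n <= (1 - x) ^+ n.
Proof.
move=> x_le1; elim: n => [|n IH]; first by rewrite expr0 mulr0n subr0.
have step : (1 - x *+ n) * (1 - x) <= (1 - x) ^+ n * (1 - x).
  by apply: ler_wpM2r => //; lra.
have sq_ge0 : 0 <= x *+ n * x by rewrite mulrnAl mulrn_wge0 // -expr2 sqr_ge0.
rewrite exprSr mulrSr; nra.
Qed.

Lemma exists_root_ge {R : realFieldType} (q : R) n :
  0 < q < 1 -> exists2 lam, 0 < lam < 1 & q <= lam ^+ n.
Proof.
move=> /andP[q_gt0 q_lt1].
pose x := (1 - q) / n.+1%:R.
have x_gt0 : 0 < x by rewrite divr_gt0 ?subr_gt0.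
have x_le : x <= 1 - q.
  by rewrite ler_pdivrMr // ler_peMr ?ler1n //; lra.
have nx : x *+ n.+1 = 1 - q by rewrite -mulr_natr divfK ?pnatr_eq0.
exists (1 - x); first by apply/andP; split; lra.
have x_le1 : x <= 1 by lra.
have := bernoulli_subr x n.+1 x_le1.
rewrite nx exprSr subKr => /le_trans; apply; apply: ler_piMr; last lra.
by apply: exprn_ge0; lra.
Qed.

Lemma exprn_le_blocks {R : realDomainType} (q lam : R) K j n :
  0 <= q -> q <= lam ^+ K -> 0 <= lam <= 1 -> (n <= j * K)%N -> q ^+ j <= lam ^+ n.
Proof.
move=> q_ge0 q_le /andP[lam_ge0 lam_le1] le_n.
apply: (@le_trans _ _ (lam ^+ (j * K))); last exact: ler_wiXn2l.
by rewrite mulnC exprM lerXn2r // nnegrE exprn_ge0.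
Qed.

Lemma finite_lt1_bound {R : realFieldType} (s : seq R) :
  exists2 q, 0 < q < 1 & forall x, x \in s -> x < 1 -> x <= q.
Proof.
exists (\big[Order.max/2^-1]_(x <- s | x < 1) x).
  apply/andP; split; last by apply: bigmax_lt => //; lra.
  by apply: lt_le_trans (bigmax_ge_id _ _ _ _); rewrite invr_gt0.
by move=> x xs x_lt1; apply: le_bigmax_seq.
Qed.

Lemma finite_upper_bound {R : realDomainType} (s : seq R) :
  exists2 Mx, 0 < Mx & forall x, x \in s -> x <= Mx.
Proof.
exists (\big[Order.max/1]_(x <- s) x).
  exact: lt_le_trans ltr01 (bigmax_ge_id _ _ _ _).
by move=> x xs; apply: le_bigmax_seq.
Qed.

Section GreedyBlocks.
Context {R : realType} {N M : nat} (sA : seq 'M[R]_(N, M)) (sB : seq 'M[R]_(M, N)).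
Context (nrm : 'M[R]_N -> R) (K : nat) (q lam Mx : R).
Hypothesis nrm_submult : submult_norm nrm.
Hypothesis block_le : forall A, valued_in sA A -> exists k B,
  [/\ (0 < k <= K)%N, valued_upto sB k B & nrm (prodAB A B k) <= q].
Hypothesis short_prodAB_le : forall k A B, (k <= K)%N ->
  valued_upto sA k A -> valued_upto sB k B -> nrm (prodAB A B k) <= Mx.
Hypotheses (q_gt0 : 0 < q) (q_le : q <= lam ^+ K).
Hypotheses (lam_ge0 : 0 <= lam) (lam_le1 : lam <= 1).
Hypothesis Mx_ge0 : 0 <= Mx.
Variables (A : nat -> 'M[R]_(N, M)).
Hypothesis A_in : valued_in sA A.

(* [B] on [1..t] consists of [j] greedy blocks, each of length in [1..K]. *)
Definition decaying_prefix j t B :=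
  [/\ (j <= t <= j * K)%N, valued_upto sB t B,
      nrm (prodAB A B t) <= nrm 1%:M * q ^+ j
    & forall n, (0 < n <= t)%N -> nrm (prodAB A B n) <= Mx * nrm 1%:M / q * lam ^+ n].

Lemma decaying_prefix0 B : decaying_prefix 0 0 B.
Proof.
split=> //=; first by move=> i /andP[/leq_trans le_1 /le_1].
  by rewrite expr0 mulr1.
by move=> n /andP[/leq_trans le_1 /le_1].
Qed.

Lemma block_tail_le j n :
  (n <= j.+1 * K)%N -> Mx * (nrm 1%:M * q ^+ j) <= Mx * nrm 1%:M / q * lam ^+ n.
Proof.
move=> le_n; have C_ge0 : 0 <= Mx * nrm 1%:M / q.
  by rewrite divr_ge0 ?mulr_ge0 ?(submult_norm_ge0 nrm nrm_submult) // ltW.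
have -> : Mx * (nrm 1%:M * q ^+ j) = Mx * nrm 1%:M / q * q ^+ j.+1.
  by rewrite exprS; field; rewrite gt_eqF.
by rewrite ler_wpM2l // (exprn_le_blocks _ _ K) ?(ltW q_gt0) ?lam_ge0.
Qed.

Lemma decaying_prefix_step j t B : decaying_prefix j t B ->
  exists2 tB : nat * (nat -> 'M[R]_(M, N)),
    decaying_prefix j.+1 tB.1 tB.2 & (t <= tB.1)%N /\ eq_upto t B tB.2.
Proof.
move=> [/andP[le_jt le_tK] Bs nrm_t nrm_le].
have [k [B' [/andP[k_gt0 le_kK] B's nrm_k]]] :=
  block_le _ (valued_in_shift (t := t) A_in).
have nrm_ge0 := submult_norm_ge0 nrm nrm_submult.
have nrm_mul X Y : nrm (X *m Y) <= nrm X * nrm Y by case: nrm_submult.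
exists (t + k, splice t B B'); last by split; [exact: leq_addr | exact: eq_upto_splice].
split=> /=.
- by rewrite mulSn; apply/andP; split; lia.
- move=> i /andP[i_gt0 le_i]; rewrite /splice; case: leqP => [le_it | lt_ti].
    by apply: Bs; rewrite i_gt0.
  by apply: B's; rewrite subn_gt0 lt_ti leq_subLR.
- rewrite prodAB_splice (le_trans (nrm_mul _ _)) // exprS mulrCA.
  exact: ler_pM.
move=> n /andP[n_gt0 le_n]; case: (leqP n t) => [le_nt | lt_tn].
  rewrite -(prodAB_eq_upto eq_upto_refl (eq_upto_le le_nt eq_upto_splice)).
  by apply: nrm_le; rewrite n_gt0.
have -> : n = (t + (n - t))%N by rewrite subnKC // ltnW.
rewrite prodAB_splice (le_trans (nrm_mul _ _)) //.
apply: le_trans (block_tail_le j _ _); last by rewrite mulSn; lia.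
apply: ler_pM => //; apply: short_prodAB_le; first by lia.
  exact: valued_in_upto (valued_in_shift A_in).
by apply: valued_upto_le B's; lia.
Qed.

Lemma exists_decaying_choice : exists B, valued_in sB B /\
  forall n, (0 < n)%N -> nrm (prodAB A B n) <= Mx * nrm 1%:M / q * lam ^+ n.
Proof.
pose X := (nat * (nat -> 'M[R]_(M, N)))%type.
pose P j (tB : X) := decaying_prefix j tB.1 tB.2.
pose Rel (j : nat) (tB tB' : X) := (tB.1 <= tB'.1)%N /\ eq_upto tB.1 tB.2 tB'.2.
have [F F_chain] := @dependent_choice X P Rel (0%N, fun=> 0) (decaying_prefix0 _)
  (fun j tB => decaying_prefix_step j tB.1 tB.2).
pose t j := (F j).1; pose g j := (F j).2.
have t_ge j : (j <= t j)%N by case: (F_chain j).1 => /andP[].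
have diag := diagonal_eq_upto t g
  (fun j => (F_chain j).2.1) (fun j => (F_chain j).2.2) t_ge.
have n_t n : (0 < n)%N -> (0 < n <= t n)%N by move=> n_gt0; rewrite n_gt0 t_ge.
exists (fun i => g i i); split=> n /n_t n_tn.
  by case: (F_chain n).1 => _ + _ _; apply.
rewrite (prodAB_eq_upto eq_upto_refl (diag n)).
by case: (F_chain n).1 => _ _ _; apply.
Qed.

End GreedyBlocks.

Theorem theorem3 (R : realType) (N M : nat) (hN : (0 < N)%N) (hM : (0 < M)%N)
  (sA : seq 'M[R]_(N, M)) (sB : seq 'M[R]_(M, N)) (nrm : 'M[R]_N -> R)
  (hnrm : submult_norm nrm)
  (hyp : forall A : nat -> 'M[R]_(N, M), (forall n, (0 < n)%N -> A n \in sA) ->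
     exists k : nat, (0 < k)%N /\
       exists B : nat -> 'M[R]_(M, N),
         (forall i, (0 < i <= k)%N -> B i \in sB) /\ nrm (prodAB A B k) < 1) :
  exists C : R, exists lam : R, 0 < C /\ 0 < lam /\ lam < 1 /\
    forall A : nat -> 'M[R]_(N, M), (forall n, (0 < n)%N -> A n \in sA) ->
      exists B : nat -> 'M[R]_(M, N),
        (forall n, (0 < n)%N -> B n \in sB) /\
        (forall n, (0 < n)%N -> nrm (prodAB A B n) <= C * lam ^+ n).
Proof.
have [K bar_K] := fan_bound sA _ (contracting_prefix_eq_upto sB nrm) hyp.
pose L := [seq nrm p | k <- iota 0 K.+1, p <- prods sA sB k].
have L_prodAB k A B : (k <= K)%N ->
    valued_upto sA k A -> valued_upto sB k B -> nrm (prodAB A B k) \in L.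
  move=> le_kK As Bs.
  apply: (allpairs_f_dep (fun=> nrm)) (prodAB_in_prods _ _ _ _ _ As Bs).
  by rewrite mem_iota add0n ltnS.
have [q q01 q_ub] := finite_lt1_bound L; have /andP[q_gt0 _] := q01.
have [Mx Mx_gt0 Mx_ub] := finite_upper_bound L.
have [lam /andP[lam_gt0 lam_lt1] q_le] := exists_root_ge q K q01.
have block_le A : valued_in sA A -> exists k B,
    [/\ (0 < k <= K)%N, valued_upto sB k B & nrm (prodAB A B k) <= q].
  move=> A_in; have [k [k_K [B [Bs B_lt1]]]] := bar_K A A_in.
  exists k, B; split=> //; apply: q_ub B_lt1.
  by apply: L_prodAB Bs; [case/andP: k_K | exact: valued_in_upto].
have short_le k A B : (k <= K)%N ->
    valued_upto sA k A -> valued_upto sB k B -> nrm (prodAB A B k) <= Mx.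
  by move=> le_kK As Bs; apply/Mx_ub/L_prodAB.
have nrm1_gt0 := submult_norm1_gt0 nrm hnrm hN.
exists (Mx * nrm 1%:M / q), lam; do 3?split=> //.
  by rewrite !(mulr_gt0, invr_gt0).
exact: exists_decaying_choice hnrm block_le short_le q_gt0 q_le
  (ltW lam_gt0) (ltW lam_lt1) (ltW Mx_gt0).
Qed.
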